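(* For every integer $n\ge 0$, there is exactly one Dumont permutation of the second kind of length $2n$ avoiding the pattern $312$, i.e. $|\mathfrak D^2_{2n}(312)|=1$ (for $n=0$ the set consists of the empty permutation).
   Context: A Dumont permutation of the second kind of length $2n$ is a permutation $\pi\in\mathfrak S_{2n}$ such that for every $i=1,\dots,n$ one has $\pi(2i)<2i$ and $\pi(2i-1)\ge 2i-1$. $\mathfrak D^2_{2n}$ denotes the set of these. A permutation $\sigma$ contains a pattern $\tau\in\mathfrak S_k$ if some subsequence $(\sigma(i_1),\dots,\sigma(i_k))$, $i_1<\dots<i_k$, is order-isomorphic to $\tau$; otherwise $\sigma$ avoids $\tau$. $\mathfrak D^2_{2n}(T)$ denotes the set of permutations in $\mathfrak D^2_{2n}$ avoiding every pattern in $T$. *)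

From mathcomp Require Import all_boot all_order all_fingroup.
Set Implicit Arguments. Unset Strict Implicit. Unset Printing Implicit Defensive.

(* Positions and values are 0-based: index k : 'I_m stands for the 1-based
   position k+1, and value s k stands for s k + 1.  *)

(* Dumont permutation of the second kind (length m = 2n):
   1-based: pi(2i) < 2i and pi(2i-1) >= 2i-1.
   0-based index k = 1-based position k+1: even 1-based positions are odd k. *)
Definition dumont2 (m : nat) (s : 'S_m) : bool :=
  [forall k : 'I_m, if odd k then (s k < k)%N else (k <= s k)%N].

Definition contains (m k : nat) (s : 'S_m) (tau : 'S_k) : bool :=
  [exists f : {ffun 'I_k -> 'I_m},
     [forall a : 'I_k, forall b : 'I_k,
        ((a < b)%N ==> (f a < f b)%N) &&
        ((s (f a) < s (f b))%N == (tau a < tau b)%N)]].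

Definition avoids (m k : nat) (s : 'S_m) (tau : 'S_k) : bool := ~~ contains s tau.

Definition p312_fun (i : 'I_3) : 'I_3 :=
  match val i with 0 => inord 2 | 1 => inord 0 | _ => inord 1 end.

Lemma p312_inj : injective p312_fun.
Proof. by apply/injectiveP; apply/injectiveP => -[[|[|[|?]]] Hi] -[[|[|[|?]]] Hj] //= /(congr1 val); rewrite /= ?inordK //; move=> E; apply/val_inj. Qed.

Definition p312 : 'S_3 := perm p312_inj.

Definition D2avoid (n k : nat) (tau : 'S_k) : {set 'S_(2 * n)} :=
  [set s : 'S_(2 * n) | dumont2 s && avoids s tau].

From mathcomp Require Import all_boot all_order all_fingroup.
From mathcomp Require Import zify.

(* The only candidate is the product of the adjacent transpositions
   (1 2)(3 4)...(2n-1 2n).  It is Dumont and avoids 312, since an entry can only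
   exceed a later one when the two are adjacent.  Conversely, if s agrees with it
   on the first 2i positions, then s maps them onto the first 2i values, so the
   Dumont condition forces s(2i+2) = 2i+1; if s(2i+1) were not 2i+2, the value
   2i+2 would sit further right and s(2i+1), s(2i+2), 2i+2 would form a 312. *)

Lemma contains_p312P m (s : 'S_m) :
  reflect (exists x y z : 'I_m, [/\ x < y, y < z, s y < s z & s z < s x])
          (contains s p312).
Proof.
have tauE (a b : 'I_3) : (p312 a < p312 b) =
    (match val a with 0 => 2 | 1 => 0 | _ => 1 end <
     match val b with 0 => 2 | 1 => 0 | _ => 1 end).
  by rewrite !permE /p312_fun; case: a b => -[|[|[|?]]] ? [[|[|[|?]]] ?];
     rewrite /= ?inordK.
apply: (iffP existsP) => [[f /forallP H] | [x [y [z [xy yz syz szx]]]]].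
  have P a b := forallP (H a) b.
  case/andP: (P (inord 0) (inord 1)) => /implyP lt01 _.
  case/andP: (P (inord 1) (inord 2)) => /implyP lt12 /eqP e12.
  case/andP: (P (inord 2) (inord 0)) => _ /eqP e20.
  move: lt01 lt12 e12 e20; rewrite !tauE /= !inordK // => /(_ isT) lt01 /(_ isT) lt12 e12 e20.
  by exists (f (inord 0)), (f (inord 1)), (f (inord 2)); rewrite e12 e20.
exists [ffun a : 'I_3 => match val a with 0 => x | 1 => y | _ => z end].
apply/forallP => -[[|[|[|?]]] ?] //; apply/forallP => -[[|[|[|?]]] ?] //;
  rewrite !ffunE tauE /=; lia.
Qed.

Definition pairswap (k : nat) : nat := if odd k then k.-1 else k.+1.

Lemma pairswapK : involutive pairswap.
Proof. by move=> k; rewrite /pairswap; case Hk: (odd k); case: ifP; lia. Qed.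

Lemma pairswap_ltn2 m k : (pairswap k < 2 * m) = (k < 2 * m).
Proof. rewrite /pairswap; case: ifP; lia. Qed.

Lemma pairswap_dumont k : if odd k then pairswap k < k else k <= pairswap k.
Proof. rewrite /pairswap; case Hk: (odd k); lia. Qed.

Lemma pairswap_lt2 x y : x.+2 <= y -> pairswap x < pairswap y.
Proof. rewrite /pairswap; case: ifP; case: ifP; lia. Qed.

Definition pairswap_ord n (k : 'I_(2 * n)) : 'I_(2 * n) :=
  Ordinal (etrans (pairswap_ltn2 n k) (ltn_ord k)).

Lemma pairswap_ord_inj n : injective (@pairswap_ord n).
Proof. by move=> a b /(congr1 (pairswap \o val)) /=; rewrite !pairswapK => /val_inj. Qed.

Definition pairswap_perm n : 'S_(2 * n) := perm (@pairswap_ord_inj n).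

Lemma pairswap_permE n (k : 'I_(2 * n)) : val (pairswap_perm n k) = pairswap k.
Proof. by rewrite permE. Qed.

Lemma dumont2_pairswap n : dumont2 (pairswap_perm n).
Proof. by apply/forallP => k; rewrite pairswap_permE pairswap_dumont. Qed.

Lemma avoids_pairswap_p312 n : avoids (pairswap_perm n) p312.
Proof.
apply/contains_p312P => -[x [y [z [xy yz _]]]].
by rewrite !pairswap_permE ltnNge => /negP; apply; apply/ltnW/pairswap_lt2; lia.
Qed.

Section Uniqueness.

Variables (n : nat) (s : 'S_(2 * n)).
Hypotheses (s_dumont : dumont2 s) (s_avoids : avoids s p312).
Local Notation t := (pairswap_perm n).

Section Step.

Variable i : nat.
Hypothesis i_lt_n : i < n.
Hypothesis s_prefix : forall k : 'I_(2 * n), k < 2 * i -> s k = t k.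

Lemma s_lt_prefix (k : 'I_(2 * n)) : k < 2 * i -> s k < 2 * i.
Proof. by move=> lt_k; rewrite s_prefix // pairswap_permE pairswap_ltn2. Qed.

Lemma s_lt_prefixV (k : 'I_(2 * n)) : s k < 2 * i -> k < 2 * i.
Proof.
move=> lt_sk; have lt_tsk : t (s k) < 2 * i by rewrite pairswap_permE pairswap_ltn2.
suff <- : t (s k) = k by [].
apply: (@perm_inj _ s); rewrite s_prefix //; apply: val_inj.
by rewrite !pairswap_permE pairswapK.
Qed.

Fact even_pos_lt : 2 * i < 2 * n. Proof. lia. Qed.
Fact odd_pos_lt : (2 * i).+1 < 2 * n. Proof. lia. Qed.

Let p0 : 'I_(2 * n) := Ordinal even_pos_lt.
Let p1 : 'I_(2 * n) := Ordinal odd_pos_lt.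

Lemma s_odd_pos : s p1 = 2 * i :> nat.
Proof.
have := forallP s_dumont p1; rewrite /= ifT; last by lia.
have := contraNN (@s_lt_prefixV p1); rewrite /= -!leqNgt; lia.
Qed.

Lemma s_even_pos : s p0 = (2 * i).+1 :> nat.
Proof.
have := forallP s_dumont p0; rewrite /= ifF; last by lia.
have s_p1 := s_odd_pos.
have ne01 : s p0 != s p1 :> nat by rewrite val_eqE (inj_eq perm_inj) -val_eqE /=; lia.
pose j := (s^-1)%g p1; have sj : s j = (2 * i).+1 :> nat by rewrite /j permKV.
have sj0 : j = 2 * i :> nat -> s j = s p0 :> nat.
  by move=> e; congr (nat_of_ord (s _)); apply: val_inj.
have sj1 : j = (2 * i).+1 :> nat -> s j = s p1 :> nat.
  by move=> e; congr (nat_of_ord (s _)); apply: val_inj.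
have j_ge : 2 * i <= j.
  by rewrite leqNgt; apply/negP => /s_lt_prefix; rewrite sj; lia.
move=> le_s0; case: (ltnP (2 * i).+1 (s p0)) => [lt_s0 | ]; last by lia.
have /negP [] := s_avoids; apply/contains_p312P.
by exists p0, p1, j; split => /=; lia.
Qed.

Lemma s_prefix_step (k : 'I_(2 * n)) : k < 2 * i.+1 -> s k = t k.
Proof.
rewrite mulnS => lt_k; have [lt_ki | ge_ki] := ltnP k (2 * i); first exact: s_prefix.
have [->|->] : k = p0 \/ k = p1.
  by case: (ltnP k (2 * i).+1) => ?; [left | right]; apply: val_inj => /=; lia.
  by apply: val_inj; rewrite /= pairswap_permE s_even_pos /pairswap oddM.
by apply: val_inj; rewrite /= pairswap_permE s_odd_pos /pairswap /= oddM.
Qed.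

End Step.

Lemma dumont2_avoids_p312_pairswap : s = t.
Proof.
suff agree i : i <= n -> forall k : 'I_(2 * n), k < 2 * i -> s k = t k.
  by apply/permP => k; apply: (agree n) => //; exact: ltn_ord.
elim: i => [|i IH] lt_in k; first by rewrite muln0.
by apply: s_prefix_step => //; apply: IH; exact: ltnW.
Qed.

End Uniqueness.

Theorem theorem2p4 (n : nat) : #|D2avoid n p312| = 1%N.
Proof.
suff -> : D2avoid n p312 = [set pairswap_perm n] by exact: cards1.
apply/setP => s; rewrite in_set1 inE.
apply/andP/eqP => [[s_dumont s_avoids] | ->].
  exact: dumont2_avoids_p312_pairswap.
by split; [exact: dumont2_pairswap | exact: avoids_pairswap_p312].
Qed.
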